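(* Let $P$ be the random walk on a connected weighted graph on finite vertex set $X$, let $M\subseteq X$ be nonempty, let $S\subseteq X\setminus M$ be nonempty, and let $p\in\mathbb R$ and $T\in\mathbb N$ satisfy $\frac{2}{T}\le\pi(S)\,p\le\frac{1}{C_{S,M}}$. Then, for the walk started from $Y_0\sim\pi|_S$, \[ \Pr_{\pi|_S}\big(\tau_M<\tau_S^+\ \text{and}\ \tau_S^+<T\big)\ge p/2, \] i.e., with probability at least $p/2$ the walk first hits $M$ and then returns to $S$ within the first $T$ steps.
   Context: Weighted graph $w_{u,v}=w_{v,u}\ge0$, $w_u=\sum_vw_{u,v}$, $W=\sum_{u,v}w_{u,v}$ (ordered pairs), $P_{u,v}=w_{u,v}/w_u$, $\pi_u=w_u/W$, $\pi(S)=\sum_{u\in S}\pi_u$, $(\pi|_S)_u=\pi_u/\pi(S)$ for $u\in S$. $\tau_M=\min\{i\ge0:Y_i\in M\}$, $\tau_S^+=\min\{i>0:Y_i\in S\}$. A unit flow from a distribution $\sigma$ supported on $X\setminus M$ to $M$ is $p:X\times X\to\mathbb R$ with $p_{u,v}=0$ if $w_{u,v}=0$, $p_{u,v}=-p_{v,u}$, $\sum_vp_{u,v}=\sigma_u$ for $u\notin M$, $\sum_{u\in M}\sum_{v\notin M}p_{u,v}=-1$. $R_{\sigma,M}=\min_p\sum_{\{u,v\}}p_{u,v}^2/w_{u,v}$, $R_{S,M}=\min_{\sigma:\mathrm{supp}(\sigma)\subseteq S}R_{\sigma,M}$, $C_{S,M}=WR_{S,M}$. *)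

From Stdlib Require Import Reals ClassicalEpsilon.
From HB Require Import structures.
From mathcomp Require Import all_boot.

Set Implicit Arguments.
Unset Strict Implicit.
Unset Printing Implicit Defensive.

Local Open Scope R_scope.

Section Graph.
Variable X : finType.
Variable w : X -> X -> R.

Definition wdeg (u : X) : R := \big[Rplus/0]_(v : X) w u v.
Definition Wtot : R := \big[Rplus/0]_(u : X) \big[Rplus/0]_(v : X) w u v.
Definition Pmat (u v : X) : R := w u v / wdeg u.
Definition pi (u : X) : R := wdeg u / Wtot.
Definition piSet (S : {set X}) : R := \big[Rplus/0]_(u in S) pi u.
Definition piRestr (S : {set X}) (u : X) : R :=
  if u \in S then pi u / piSet S else 0.

Definition connected_graph : Prop :=
  forall u v : X, exists s : seq X, last u s = v /\
    forall i : nat, (i < size s)%N -> 0 < w (nth u (u :: s) i) (nth u s i).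

Definition distr_on (S : {set X}) (sigma : X -> R) : Prop :=
  (forall u, 0 <= sigma u) /\ (forall u, u \notin S -> sigma u = 0) /\
  \big[Rplus/0]_(u : X) sigma u = 1.

Definition unit_flow (sigma : X -> R) (M : {set X}) (f : X -> X -> R) : Prop :=
  (forall u v, w u v = 0 -> f u v = 0) /\
  (forall u v, f u v = - f v u) /\
  (forall u, u \notin M -> \big[Rplus/0]_(v : X) f u v = sigma u) /\
  \big[Rplus/0]_(u in M) \big[Rplus/0]_(v in ~: M) f u v = -1.

(* energy sum_{unordered {u,v}} f_{u,v}^2 / w_{u,v}: half the sum over ordered
   pairs (diagonal terms vanish since f is antisymmetric), terms with
   w_{u,v} = 0 (where f_{u,v} = 0) contribute 0 *)
Definition energy (f : X -> X -> R) : R :=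
  / 2 * \big[Rplus/0]_(u : X) \big[Rplus/0]_(v : X)
          (if Rlt_dec 0 (w u v) then (f u v) ^ 2 / w u v else 0).

End Graph.

(* minimum of a set of reals (0 if the minimum does not exist) *)
Definition is_min (E : R -> Prop) (m : R) : Prop :=
  E m /\ forall x, E x -> m <= x.

Definition Rmin_of (E : R -> Prop) : R :=
  match excluded_middle_informative (exists m, is_min E m) with
  | left H => proj1_sig (constructive_indefinite_description _ H)
  | right _ => 0
  end.

Section Resistance.
Variable X : finType.
Variable w : X -> X -> R.

Definition R_sigma (sigma : X -> R) (M : {set X}) : R :=
  Rmin_of (fun r => exists f, unit_flow w sigma M f /\ r = energy w f).

Definition R_SM (S M : {set X}) : R :=
  Rmin_of (fun r => exists sigma, distr_on S sigma /\ r = R_sigma sigma M).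

Definition C_SM (S M : {set X}) : R := Wtot w * R_SM S M.

Definition traj (N : nat) := {ffun 'I_N.+1 -> X}.
Definition yat (N : nat) (y : traj N) (i : nat) : X := y (inord i).

Definition path_weight (S : {set X}) (N : nat) (y : traj N) : R :=
  piRestr w S (yat y 0) *
  \big[Rmult/1]_(i < N) Pmat w (yat y i) (yat y i.+1).

Definition Prob (S : {set X}) (N : nat) (ev : traj N -> bool) : R :=
  \big[Rplus/0]_(y : traj N) (if ev y then path_weight S y else 0).

End Resistance.

(* first index i with lo <= i <= N and y i \in A; N.+1 if there is none
   (i.e. the true hitting time exceeds N) *)
Definition first_hit (X : finType) (y : nat -> X) (A : {set X}) (lo N : nat) : nat :=
  (lo + find (fun k => y (lo + k) \in A) (iota 0 (N.+1 - lo)))%N.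

Definition tau (X : finType) (N : nat) (y : traj X N) (M : {set X}) : nat :=
  first_hit (yat y) M 0 N.
Definition tau_plus (X : finType) (N : nat) (y : traj X N) (S : {set X}) : nat :=
  first_hit (yat y) S 1 N.

From Pilot Require Import Defs.
From Stdlib Require Import Reals Lra ClassicalEpsilon.
From HB Require Import structures.
From mathcomp Require Import all_boot.

(* The event has probability [1 - a - c], where [a] is the chance of not
   returning to [S] before time [T] and [c] the chance of returning to [S]
   before [M].  Averaged over [pi|_S], Kac's telescoping argument gives
   [a <= 1 / (T pi(S)) <= p/2].  For [c], the probability [q] of reaching [S]
   before [M] is 1 on [S], 0 on [M] and subharmonic elsewhere; testing a
   minimal unit flow against [q] and using Young's inequality gives
   [1 <= C_{S,M} pi(S) (1 - c)], i.e. [c <= 1 - p]. *)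

Set Implicit Arguments.
Unset Strict Implicit.
Unset Printing Implicit Defensive.
Local Open Scope R_scope.

Lemma RplusA : associative Rplus. Proof. by move=> x y z; ring. Qed.
Lemma RplusC : commutative Rplus. Proof. by move=> x y; ring. Qed.
Lemma Rplus0 : left_id 0 Rplus. Proof. by move=> x; ring. Qed.
HB.instance Definition _ := Monoid.isComLaw.Build R 0 Rplus RplusA RplusC Rplus0.
Lemma RmultA : associative Rmult. Proof. by move=> x y z; ring. Qed.
Lemma RmultC : commutative Rmult. Proof. by move=> x y; ring. Qed.
Lemma Rmul1 : left_id 1 Rmult. Proof. by move=> x; ring. Qed.
HB.instance Definition _ := Monoid.isComLaw.Build R 1 Rmult RmultA RmultC Rmul1.
Lemma Rmul0 : left_zero 0 Rmult. Proof. by move=> x; ring. Qed.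
Lemma Rmulr0 : right_zero 0 Rmult. Proof. by move=> x; ring. Qed.
HB.instance Definition _ := Monoid.isMulLaw.Build R 0 Rmult Rmul0 Rmulr0.
Lemma RmulDl : left_distributive Rmult Rplus. Proof. by move=> x y z; ring. Qed.
Lemma RmulDr : right_distributive Rmult Rplus. Proof. by move=> x y z; ring. Qed.
HB.instance Definition _ := Monoid.isAddLaw.Build R Rmult Rplus RmulDl RmulDr.

Section RealSums.
Variables (I : Type) (r : seq I) (P : pred I).

Lemma leR_sum (F G : I -> R) : (forall i, P i -> F i <= G i) ->
  \big[Rplus/0]_(i <- r | P i) F i <= \big[Rplus/0]_(i <- r | P i) G i.
Proof. by move=> FG; apply: (big_ind2 (fun a b => a <= b)) => //; [lra|move=> *; lra]. Qed.

Lemma sumR_ge0 (F : I -> R) : (forall i, P i -> 0 <= F i) ->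
  0 <= \big[Rplus/0]_(i <- r | P i) F i.
Proof. by move=> F0; apply: (big_ind (fun a => 0 <= a)) => //; [lra|move=> *; lra]. Qed.

Lemma sumRN (F : I -> R) :
  \big[Rplus/0]_(i <- r | P i) - F i = - \big[Rplus/0]_(i <- r | P i) F i.
Proof. by rewrite (big_morph Ropp (id1 := 0) (op1 := Rplus)) //; [move=> x y|]; ring. Qed.

Lemma sumRB (F G : I -> R) :
  \big[Rplus/0]_(i <- r | P i) (F i - G i) =
  \big[Rplus/0]_(i <- r | P i) F i - \big[Rplus/0]_(i <- r | P i) G i.
Proof. by rewrite /Rminus big_split /= sumRN. Qed.

End RealSums.

Lemma sumR_gt0 (I : finType) (P : pred I) (F : I -> R) i0 :
  P i0 -> 0 < F i0 -> (forall i, P i -> 0 <= F i) ->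
  0 < \big[Rplus/0]_(i | P i) F i.
Proof.
move=> Pi0 Fi0 F0; rewrite (bigD1 i0) //=.
have : 0 <= \big[Rplus/0]_(i | P i && (i != i0)) F i.
  by apply: sumR_ge0 => i /andP[/F0].
lra.
Qed.

Lemma decr_sum_ge (a : nat -> R) m : (forall k, a k.+1 <= a k) ->
  INR m.+1 * a m <= \big[Rplus/0]_(k < m.+1) a k.
Proof.
move=> a_decr; elim: m => [|m IH]; first by rewrite big_ord_recr big_ord0 /=; lra.
rewrite big_ord_recr /= -/(INR m.+1).
apply: Rle_trans (Rplus_le_compat_r (a m.+1) _ _ IH).
have : INR m.+1 * a m.+1 <= INR m.+1 * a m by apply/Rmult_le_compat_l/a_decr/pos_INR.
lra.
Qed.

Lemma sumR_telescope (a : nat -> R) m :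
  \big[Rplus/0]_(k < m) (a k - a k.+1) = a 0%N - a m.
Proof. by elim: m => [|m IH]; rewrite ?big_ord0 ?big_ord_recr /= ?IH; ring. Qed.

Section Trajectories.
Variable X : finType.

Definition traj_seq n (y : traj X n) : seq X := map (yat y) (iota 0 n.+1).

Definition traj_cons n (x : X) (y : traj X n) : traj X n.+1 :=
  [ffun i : 'I_n.+2 => if (i : nat) is k.+1 then yat y k else x].

Definition traj_behead n (y : traj X n.+1) : traj X n :=
  [ffun j : 'I_n.+1 => yat y j.+1].

Lemma yat_cons0 n x (y : traj X n) : yat (traj_cons x y) 0 = x.
Proof. by rewrite /yat /traj_cons ffunE inordK. Qed.

Lemma yat_consS n x (y : traj X n) k :
  (k < n.+1)%N -> yat (traj_cons x y) k.+1 = yat y k.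
Proof. by move=> lt_kn; rewrite /yat /traj_cons ffunE inordK. Qed.

Lemma traj_consK n x : cancel (@traj_cons n x) (@traj_behead n).
Proof. by move=> y; apply/ffunP => j; rewrite ffunE yat_consS // /yat inord_val. Qed.

Lemma traj_beheadK n (y : traj X n.+1) : traj_cons (yat y 0) (traj_behead y) = y.
Proof.
apply/ffunP => -[[|k] lt_k]; rewrite /traj_cons /traj_behead /yat ffunE /=.
  by congr (y _); apply: val_inj; rewrite /= inordK.
by rewrite ffunE inordK //; congr (y _); apply: val_inj; rewrite /= inordK.
Qed.

Lemma sum_traj0 (F : traj X 0 -> R) :
  \big[Rplus/0]_(y : traj X 0) F y = \big[Rplus/0]_(x : X) F [ffun _ => x].
Proof.
rewrite (reindex (fun x : X => [ffun _ : 'I_1 => x])) //=.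
exists (fun y : traj X 0 => y ord0) => [x _ | y _]; first by rewrite ffunE.
by apply/ffunP => i; rewrite ffunE (ord1 i).
Qed.

Lemma sum_trajS n (F : traj X n.+1 -> R) :
  \big[Rplus/0]_(y : traj X n.+1) F y =
  \big[Rplus/0]_(x : X) \big[Rplus/0]_(y : traj X n) F (traj_cons x y).
Proof.
rewrite pair_big /= (reindex (fun xy : X * traj X n => traj_cons xy.1 xy.2)) //=.
exists (fun y => (yat y 0, traj_behead y)) => [[x y] _ | y _] /=.
  by rewrite yat_cons0 traj_consK.
by rewrite traj_beheadK.
Qed.

Lemma traj_seq_cons n x (y : traj X n) : traj_seq (traj_cons x y) = x :: traj_seq y.
Proof.
have iotaS : iota 0 n.+2 = 0%N :: map (addn 1) (iota 0 n.+1) by rewrite -iotaDl.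
rewrite /traj_seq iotaS map_cons -map_comp yat_cons0; congr (_ :: _); apply/eq_in_map => k; rewrite mem_iota /= => lt_k.
by rewrite add1n yat_consS.
Qed.

End Trajectories.

Definition Rind (b : bool) : R := if b then 1 else 0.

Section RandomWalk.
Variables (X : finType) (w : X -> X -> R).
Hypothesis w_ge0 : forall u v, 0 <= w u v.
Hypothesis wdeg_gt0 : forall u, 0 < wdeg w u.

Lemma Pmat_ge0 x v : 0 <= Pmat w x v.
Proof. by rewrite /Pmat /Rdiv; apply: Rmult_le_pos => //; apply/Rlt_le/Rinv_0_lt_compat. Qed.

Lemma Pmat_sum1 x : \big[Rplus/0]_(v : X) Pmat w x v = 1.
Proof. by rewrite /Pmat /Rdiv -big_distrl /= -/(wdeg w x) Rinv_r //; apply/Rgt_not_eq. Qed.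

Lemma w_Pmat x v : w x v = wdeg w x * Pmat w x v.
Proof. by rewrite /Pmat; field; apply/Rgt_not_eq. Qed.

Lemma sum_w_Pmat x (F : X -> R) :
  \big[Rplus/0]_(v : X) (w x v * F v) = wdeg w x * \big[Rplus/0]_(v : X) (Pmat w x v * F v).
Proof. by rewrite big_distrr; apply: eq_bigr => v _ /=; rewrite w_Pmat; ring. Qed.

Lemma sum_Pmat_const x c : \big[Rplus/0]_(v : X) (Pmat w x v * c) = c.
Proof. by rewrite -big_distrl /= Pmat_sum1 Rmult_1_l. Qed.

Fixpoint walk_mean (n : nat) (x : X) (G : seq X -> R) : R :=
  if n is n'.+1 then
    \big[Rplus/0]_(v : X) (Pmat w x v * walk_mean n' v (fun s => G (x :: s)))
  else G [:: x].

Definition path_prob n (y : traj X n) : R :=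
  \big[Rmult/1]_(i < n) Pmat w (yat y i) (yat y i.+1).

Lemma path_prob_cons n x (y : traj X n) :
  path_prob (traj_cons x y) = Pmat w x (yat y 0) * path_prob y.
Proof.
rewrite /path_prob big_ord_recl /= yat_cons0 yat_consS //; congr (_ * _).
apply: eq_bigr => i _; rewrite /bump leq0n add1n.
by rewrite !yat_consS // ltnS // ltnW.
Qed.

Lemma sum_traj_walk_mean n (H : X -> R) (G : seq X -> R) :
  \big[Rplus/0]_(y : traj X n) (H (yat y 0) * path_prob y * G (traj_seq y)) =
  \big[Rplus/0]_(x : X) (H x * walk_mean n x G).
Proof.
elim: n H G => [|n IH] H G.
  rewrite sum_traj0; apply: eq_bigr => x _.
  by rewrite /path_prob big_ord0 /traj_seq /= /yat ffunE; ring.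
rewrite sum_trajS; apply: eq_bigr => x _ /=.
rewrite -(IH (Pmat w x) (fun s => G (x :: s))) big_distrr /=.
apply: eq_bigr => y _.
by rewrite yat_cons0 path_prob_cons traj_seq_cons; ring.
Qed.

Lemma walk_mean_ext n x (G1 G2 : seq X -> R) :
  (forall s, size s = n.+1 -> G1 s = G2 s) -> walk_mean n x G1 = walk_mean n x G2.
Proof.
elim: n x G1 G2 => [|n IH] x G1 G2 eqG /=; first exact: eqG.
apply: eq_bigr => v _; congr (_ * _); apply: IH => s size_s.
by apply: eqG; rewrite /= size_s.
Qed.

Lemma walk_mean_const n x c : walk_mean n x (fun _ => c) = c.
Proof.
elim: n x => [|n IH] x //=.
by under eq_bigr do rewrite IH; rewrite sum_Pmat_const.
Qed.

Lemma walk_mean_sub n x (G1 G2 : seq X -> R) :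
  walk_mean n x (fun s => G1 s - G2 s) = walk_mean n x G1 - walk_mean n x G2.
Proof.
elim: n x G1 G2 => [|n IH] x G1 G2 //=.
rewrite -sumRB; apply: eq_bigr => v _.
by rewrite (IH v (fun s => G1 (x :: s)) (fun s => G2 (x :: s))); ring.
Qed.

End RandomWalk.

Section ReturnProbability.
Variables (X : finType) (w : X -> X -> R) (M S : {set X}).
Hypothesis w_sym : forall u v, w u v = w v u.
Hypothesis w_ge0 : forall u v, 0 <= w u v.
Hypothesis wdeg_gt0 : forall u, 0 < wdeg w u.
Hypothesis S_notin_M : forall u, u \in S -> u \notin M.

Fixpoint avoid_prob (k : nat) (v : X) : R :=
  if k is k'.+1 then
    if v \in S then 0 else \big[Rplus/0]_(u : X) (Pmat w v u * avoid_prob k' u)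
  else 1.

Fixpoint reach_prob (k : nat) (v : X) : R :=
  if k is k'.+1 then
    if v \in M then 0 else if v \in S then 1
    else \big[Rplus/0]_(u : X) (Pmat w v u * reach_prob k' u)
  else 0.

Lemma walk_mean_avoid k v :
  walk_mean w k v (fun t => Rind (k <= find [in S] t)%N) = avoid_prob k v.
Proof.
elim: k v => [|k IH] v //=; case: (v \in S) => /=.
  by under eq_bigr do rewrite (walk_mean_const wdeg_gt0); rewrite sum_Pmat_const.
by apply: eq_bigr => u _; rewrite -IH.
Qed.

Lemma walk_mean_reach k v :
  walk_mean w k v (fun t =>
    Rind ((find [in S] t < k) && (find [in S] t < find [in M] t))%N) = reach_prob k v.
Proof.
elim: k v => [|k IH] v //=.
case: (v \in M) => /=.
  rewrite -[RHS](sum_Pmat_const wdeg_gt0 v 0); apply: eq_bigr => u _; congr (_ * _).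
  rewrite -(walk_mean_const wdeg_gt0 k u 0); apply: walk_mean_ext => t _.
  by rewrite ltn0 andbF.
case: (v \in S) => /=.
  by under eq_bigr do rewrite (walk_mean_const wdeg_gt0); rewrite sum_Pmat_const.
by apply: eq_bigr => u _; rewrite -IH.
Qed.

Definition return_via_M (T : nat) (s : seq X) : R :=
  let tau_S := (1 + find [in S] (behead s))%N in
  Rind ((find [in M] s < tau_S) && (tau_S < T))%N.

Lemma Prob_return_walk_mean T :
  Prob w S (fun y : traj X T => (tau y M < tau_plus y S) && (tau_plus y S < T))%N
  = \big[Rplus/0]_(x : X) (piRestr w S x * walk_mean w T x (return_via_M T)).
Proof.
rewrite /Prob -sum_traj_walk_mean; apply: eq_bigr => y _.
have -> : tau y M = find [in M] (traj_seq y).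
  by rewrite /tau /first_hit /traj_seq find_map subn0 add0n; apply: eq_find.
have -> : tau_plus y S = (1 + find [in S] (behead (traj_seq y)))%N.
  rewrite /tau_plus /first_hit /traj_seq /=.
  have -> : iota 1 T = map (addn 1) (iota 0 T) by rewrite -iotaDl.
  rewrite -map_comp find_map subSS subn0.
  by congr (_ + _)%N; apply: eq_find.
by rewrite /return_via_M /Rind /path_weight /path_prob; case: ifP => _; ring.
Qed.

Lemma walk_mean_return_via_M n x : x \in S ->
  walk_mean w n.+1 x (return_via_M n.+1) =
  1 - \big[Rplus/0]_(v : X) (Pmat w x v * avoid_prob n v)
    - \big[Rplus/0]_(v : X) (Pmat w x v * reach_prob n v).
Proof.
move=> xS /=; rewrite -[1](sum_Pmat_const wdeg_gt0 x) -!sumRB.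
apply: eq_bigr => v _; rewrite -!Rmult_minus_distr_l; congr (_ * _).
rewrite -walk_mean_avoid -walk_mean_reach -(walk_mean_const wdeg_gt0 n v 1).
rewrite -!walk_mean_sub.
apply: walk_mean_ext => t size_t.
rewrite /return_via_M /= (negbTE (S_notin_M xS)) add1n !ltnS.
set fS := find [in S] t; set fM := find [in M] t.
case: (leqP n fS) => [le_n_fS | lt_fS_n]; first by rewrite andbF /Rind /=; ring.
rewrite andbT /Rind; case: (ltngtP fM fS) => cmp_fM_fS /=; try ring.
have hasS : has [in S] t by rewrite has_find size_t (leq_trans lt_fS_n).
have hasM : has [in M] t by rewrite has_find -/fM cmp_fM_fS size_t (leq_trans lt_fS_n).
have := nth_find v hasS; have := nth_find v hasM; rewrite -/fS -/fM cmp_fM_fS => inM inS.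
by move: (S_notin_M inS); rewrite inM.
Qed.

Lemma avoid_prob_bounds k v : 0 <= avoid_prob k v <= 1.
Proof.
elim: k v => [|k IH] v /=; first lra.
case: (v \in S); first lra.
split; first by apply: sumR_ge0 => u _; apply: Rmult_le_pos; [apply: Pmat_ge0 | case: (IH u)].
rewrite -(Pmat_sum1 wdeg_gt0 v); apply: leR_sum => u _.
have := Pmat_ge0 w_ge0 wdeg_gt0 v u; have := IH u; nra.
Qed.

Lemma avoid_prob_decr k v : avoid_prob k.+1 v <= avoid_prob k v.
Proof.
elim: k v => [|k IH] v; first by have := avoid_prob_bounds 1 v; rewrite [avoid_prob 0 v]/=; lra.
rewrite [avoid_prob k.+2 v]/= [avoid_prob k.+1 v]/=; case: (v \in S); first lra.
by apply: leR_sum => u _; apply: Rmult_le_compat_l; [apply: Pmat_ge0 | apply: IH].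
Qed.

Lemma reach_prob_bounds k v : 0 <= reach_prob k v <= 1.
Proof.
elim: k v => [|k IH] v /=; first lra.
case: (v \in M); first lra; case: (v \in S); first lra.
split; first by apply: sumR_ge0 => u _; apply: Rmult_le_pos; [apply: Pmat_ge0 | case: (IH u)].
rewrite -(Pmat_sum1 wdeg_gt0 v); apply: leR_sum => u _.
have := Pmat_ge0 w_ge0 wdeg_gt0 v u; have := IH u; nra.
Qed.

Lemma reach_prob_incr k v : reach_prob k v <= reach_prob k.+1 v.
Proof.
elim: k v => [|k IH] v; first by have := reach_prob_bounds 1 v; rewrite [reach_prob 0 v]/=; lra.
rewrite [reach_prob k.+2 v]/= [reach_prob k.+1 v]/=.
case: (v \in M); first lra; case: (v \in S); first lra.
by apply: leR_sum => u _; apply: Rmult_le_compat_l; [apply: Pmat_ge0 | apply: IH].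
Qed.

(* [W] times the probability, under [pi], that [Y_0] is in [S] and
   [Y_1, ..., Y_k] are not. *)
Definition exit_mass k :=
  \big[Rplus/0]_(x in S) \big[Rplus/0]_(v : X) (w x v * avoid_prob k v).

Definition avoid_mass k := \big[Rplus/0]_(x : X) (wdeg w x * avoid_prob k x).

(* Stationarity of [pi]: [avoid_prob k.+1] vanishes on [S] and is the
   [P]-average of [avoid_prob k] off [S]. *)
Lemma avoid_mass_step k : avoid_mass k = exit_mass k + avoid_mass k.+1.
Proof.
have -> : avoid_mass k =
    \big[Rplus/0]_(x : X) \big[Rplus/0]_(v : X) (w x v * avoid_prob k v).
  rewrite /avoid_mass; under eq_bigr do rewrite /wdeg big_distrl /=.
  by rewrite exchange_big /=; apply: eq_bigr => x _; apply: eq_bigr => v _; rewrite w_sym.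
rewrite (bigID [in S]) /=; congr (_ + _).
rewrite /avoid_mass big_mkcond; apply: eq_bigr => x _ /=.
case: (x \in S) => /=; first ring.
rewrite big_distrr /=; apply: eq_bigr => v _; rewrite (w_Pmat wdeg_gt0); ring.
Qed.

Lemma exit_mass_kac n : INR n.+1 * exit_mass n <= Wtot w.
Proof.
have decr k : exit_mass k.+1 <= exit_mass k.
  apply: leR_sum => x _; apply: leR_sum => v _.
  by apply: Rmult_le_compat_l; [apply: w_ge0 | apply: avoid_prob_decr].
have tele : \big[Rplus/0]_(k < n.+1) exit_mass k = avoid_mass 0 - avoid_mass n.+1.
  by rewrite -sumR_telescope; apply: eq_bigr => k _; rewrite (avoid_mass_step k); ring.
have -> : Wtot w = avoid_mass 0 by apply: eq_bigr => x _ /=; rewrite Rmult_1_r.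
have : 0 <= avoid_mass n.+1.
  apply: sumR_ge0 => x _; apply: Rmult_le_pos; first exact/Rlt_le.
  by case: (avoid_prob_bounds n.+1 x).
have := decr_sum_ge n decr; lra.
Qed.

Definition wdegS := \big[Rplus/0]_(x in S) wdeg w x.

Lemma piSet_wdegS : piSet w S = wdegS / Wtot w.
Proof. by rewrite /piSet /Defs.pi /Rdiv big_distrl. Qed.

Definition reach_mass k :=
  \big[Rplus/0]_(x in S) \big[Rplus/0]_(v : X) (w x v * reach_prob k v).

Lemma Prob_return_via_M n : 0 < Wtot w -> 0 < wdegS ->
  Prob w S (fun y : traj X n.+1 =>
    (tau y M < tau_plus y S) && (tau_plus y S < n.+1))%N
  = (wdegS - exit_mass n - reach_mass n) / wdegS.
Proof.
move=> W_gt0 wdegS_gt0.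
rewrite Prob_return_walk_mean /Rdiv {1}/wdegS /exit_mass /reach_mass -!sumRB.
rewrite big_distrl [RHS]big_mkcond; apply: eq_bigr => x _.
rewrite /piRestr; case: ifP => xS; last by rewrite /=; ring.
rewrite walk_mean_return_via_M // piSet_wdegS /Defs.pi.
by rewrite !(sum_w_Pmat wdeg_gt0) /=; field; lra.
Qed.

Lemma energy_young (f g : X -> X -> R) c : 0 < c ->
  (forall u v, w u v = 0 -> f u v = 0) ->
  \big[Rplus/0]_(u : X) \big[Rplus/0]_(v : X) (f u v * g u v) <=
  energy w f / c + c / 2 *
    \big[Rplus/0]_(u : X) \big[Rplus/0]_(v : X) (w u v * g u v ^ 2).
Proof.
move=> c_gt0 f0.
pose e u v := if Rlt_dec 0 (w u v) then f u v ^ 2 / w u v else 0.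
have -> : energy w f / c + c / 2 *
    \big[Rplus/0]_(u : X) \big[Rplus/0]_(v : X) (w u v * g u v ^ 2) =
  \big[Rplus/0]_(u : X) \big[Rplus/0]_(v : X)
    (e u v / (2 * c) + c / 2 * (w u v * g u v ^ 2)).
  symmetry; rewrite (eq_bigr (fun u => \big[Rplus/0]_(v : X) e u v * / (2 * c) +
      c / 2 * \big[Rplus/0]_(v : X) (w u v * g u v ^ 2))); last first.
    by move=> u _; rewrite big_split /= -big_distrl -big_distrr.
  by rewrite big_split /= -big_distrl -big_distrr /= /energy /e; field; lra.
apply: leR_sum => u _; apply: leR_sum => v _; rewrite /e.
case: Rlt_dec => [w_gt0 | w_le0] /=.
  have sq : 0 <= (f u v - c * w u v * g u v) ^ 2 / (2 * c * w u v).
    by apply: Rmult_le_pos; [apply: pow2_ge_0 | apply/Rlt_le/Rinv_0_lt_compat; nra].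
  have -> : f u v ^ 2 / w u v / (2 * c) + c / 2 * (w u v * g u v ^ 2) =
    f u v * g u v + (f u v - c * w u v * g u v) ^ 2 / (2 * c * w u v).
    by field; lra.
  lra.
have w0 : w u v = 0 by have := w_ge0 u v; lra.
rewrite f0 // w0; lra.
Qed.

Section Potential.
Variable q : X -> R.
Hypothesis q_M : forall u, u \in M -> q u = 0.
Hypothesis q_S : forall u, u \in S -> q u = 1.

Lemma unit_flow_gain (sigma : X -> R) (f : X -> X -> R) :
  distr_on S sigma -> unit_flow w sigma M f ->
  \big[Rplus/0]_(u : X) \big[Rplus/0]_(v : X) (f u v * (q u - q v)) = 2.
Proof.
move=> [_ [sigma_out sigma_sum]] [_ [f_anti [f_div _]]].
have out_flow u : \big[Rplus/0]_(v : X) (f u v * q u) = sigma u.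
  rewrite -big_distrl /=; case uM: (u \in M).
    have uS : u \notin S by apply: contraTN uM; apply: S_notin_M.
    by rewrite q_M // sigma_out //; ring.
  rewrite f_div ?uM //; case uS: (u \in S); first by rewrite q_S //; ring.
  by rewrite sigma_out ?uS //; ring.
have in_flow : \big[Rplus/0]_(u : X) \big[Rplus/0]_(v : X) (f u v * q v) =
    - \big[Rplus/0]_(u : X) \big[Rplus/0]_(v : X) (f u v * q u).
  rewrite exchange_big -sumRN; apply: eq_bigr => v _; rewrite -sumRN.
  by apply: eq_bigr => u _; rewrite f_anti; ring.
transitivity (\big[Rplus/0]_(u : X) \big[Rplus/0]_(v : X) (f u v * q u)
    - \big[Rplus/0]_(u : X) \big[Rplus/0]_(v : X) (f u v * q v)).
  rewrite -sumRB; apply: eq_bigr => u _; rewrite -sumRB.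
  by apply: eq_bigr => v _; ring.
by rewrite in_flow; under eq_bigr do rewrite out_flow; rewrite sigma_sum; ring.
Qed.

Hypothesis q_ge0 : forall u, 0 <= q u.
Hypothesis q_subharmonic : forall u, u \notin M -> u \notin S ->
  q u <= \big[Rplus/0]_(v : X) (Pmat w u v * q v).

Lemma dirichlet_le :
  \big[Rplus/0]_(u : X) \big[Rplus/0]_(v : X) (w u v * (q u - q v) ^ 2) <=
  2 * (wdegS - \big[Rplus/0]_(x in S) \big[Rplus/0]_(v : X) (w x v * q v)).
Proof.
pose G u := \big[Rplus/0]_(v : X) (w u v * (q u - q v) * q u).
have symmetrize :
    \big[Rplus/0]_(u : X) \big[Rplus/0]_(v : X) (w u v * (q u - q v) ^ 2) =
    2 * \big[Rplus/0]_(u : X) G u.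
  have swap : \big[Rplus/0]_(u : X) \big[Rplus/0]_(v : X) (w u v * (q u - q v) * q v)
      = - \big[Rplus/0]_(u : X) G u.
    rewrite exchange_big -sumRN; apply: eq_bigr => u _; rewrite -sumRN.
    by apply: eq_bigr => v _; rewrite w_sym; ring.
  transitivity (\big[Rplus/0]_(u : X) G u - \big[Rplus/0]_(u : X)
      \big[Rplus/0]_(v : X) (w u v * (q u - q v) * q v)); last by rewrite swap; ring.
  rewrite -sumRB; apply: eq_bigr => u _; rewrite -sumRB.
  by apply: eq_bigr => v _; ring.
have G_le u : G u <= if u \in S then
    wdeg w u - \big[Rplus/0]_(v : X) (w u v * q v) else 0.
  rewrite /G; case uS: (u \in S).
    by rewrite q_S // /wdeg -sumRB; apply: Req_le; apply: eq_bigr => v _; ring.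
  case uM: (u \in M).
    by rewrite q_M //; apply: Req_le; rewrite big1 // => v _; ring.
  rewrite (eq_bigr (fun v => q u * q u * w u v - q u * (w u v * q v)));
    last by move=> v _; ring.
  rewrite sumRB -!big_distrr /= -/(wdeg w u) (sum_w_Pmat wdeg_gt0).
  have := q_subharmonic (negbT uM) (negbT uS).
  have := Rmult_le_pos _ _ (q_ge0 u) (Rlt_le _ _ (wdeg_gt0 u)); nra.
rewrite symmetrize; apply: Rmult_le_compat_l; first lra.
by rewrite /wdegS -sumRB [X in _ <= X]big_mkcond; apply: leR_sum => u _; apply: G_le.
Qed.

End Potential.

Lemma reach_mass_le_energy (sigma : X -> R) (f : X -> X -> R) m :
  distr_on S sigma -> unit_flow w sigma M f -> 0 < energy w f ->
  reach_mass m.+1 <= wdegS - / energy w f.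
Proof.
move=> sigma_distr f_flow E_gt0; set E := energy w f in E_gt0 *.
have f0 : forall u v, w u v = 0 -> f u v = 0 by case: f_flow.
set q := reach_prob m.+1.
have q_M u : u \in M -> q u = 0 by rewrite /q /= => ->.
have q_S u : u \in S -> q u = 1 by move=> uS; rewrite /q /= (negbTE (S_notin_M uS)) uS.
have q_ge0 u : 0 <= q u by case: (reach_prob_bounds m.+1 u).
have q_sub u : u \notin M -> u \notin S ->
    q u <= \big[Rplus/0]_(v : X) (Pmat w u v * q v).
  move=> uM uS; rewrite /q /= (negbTE uM) (negbTE uS); apply: leR_sum => v _.
  by apply: Rmult_le_compat_l; [apply: Pmat_ge0 | apply: reach_prob_incr].
have gain := unit_flow_gain q_M q_S sigma_distr f_flow.
have young := energy_young (fun u v => q u - q v) E_gt0 f0.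
have dirichlet := dirichlet_le q_M q_S q_ge0 q_sub.
rewrite gain /Rdiv Rinv_r -/E in young; last exact: Rgt_not_eq.
have : 1 <= E * (wdegS - reach_mass m.+1) by rewrite /reach_mass -/q; nra.
have E_inv := Rinv_0_lt_compat _ E_gt0.
have : / E * (E * (wdegS - reach_mass m.+1)) = wdegS - reach_mass m.+1.
  by field; apply: Rgt_not_eq.
nra.
Qed.

Lemma return_prob_ge n p (sigma : X -> R) (f : X -> X -> R) :
  0 < Wtot w -> 0 < wdegS ->
  distr_on S sigma -> unit_flow w sigma M f -> 0 < energy w f ->
  2 / INR n.+1 <= piSet w S * p -> piSet w S * p <= / (Wtot w * energy w f) ->
  p / 2 <= Prob w S (fun y : traj X n.+1 =>
    (tau y M < tau_plus y S) && (tau_plus y S < n.+1))%N.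
Proof.
move=> W_gt0 wdegS_gt0 sigma_distr f_flow E_gt0 p_ge p_le.
rewrite Prob_return_via_M //.
have kac := exit_mass_kac n.
have reach : reach_mass n <= wdegS - / energy w f.
  apply: Rle_trans (reach_mass_le_energy n sigma_distr f_flow E_gt0).
  by apply: leR_sum => x _; apply: leR_sum => v _; apply/Rmult_le_compat_l/reach_prob_incr.
have t_gt0 : 0 < INR n.+1 by apply: lt_0_INR; apply/ltP.
have exit_le : 2 * exit_mass n <= wdegS * p.
  have : 2 / INR n.+1 * (INR n.+1 * exit_mass n) = 2 * exit_mass n by field; lra.
  have : Wtot w * (piSet w S * p) = wdegS * p by rewrite piSet_wdegS; field; lra.
  have := Rmult_le_compat_l _ _ _ (Rlt_le _ _ W_gt0) p_ge.
  have := Rmult_le_compat_l _ _ _ (Rlt_le _ _ (Rdiv_lt_0_compat 2 _ Rlt_0_2 t_gt0)) kac.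
  nra.
have p_inv : wdegS * p <= / energy w f.
  have : Wtot w * / (Wtot w * energy w f) = / energy w f by field; lra.
  have : Wtot w * (piSet w S * p) = wdegS * p by rewrite piSet_wdegS; field; lra.
  have := Rmult_le_compat_l _ _ _ (Rlt_le _ _ W_gt0) p_le; lra.
apply: (Rmult_le_reg_l wdegS) => //.
have -> : wdegS * ((wdegS - exit_mass n - reach_mass n) / wdegS) =
  wdegS - exit_mass n - reach_mass n by field; lra.
lra.
Qed.

End ReturnProbability.

Lemma connected_wdeg_gt0 (X : finType) (w : X -> X -> R) :
  (forall u v, 0 <= w u v) -> connected_graph w ->
  (forall u : X, exists v, v <> u) -> forall u, 0 < wdeg w u.
Proof.
move=> w_ge0 conn other u; have [v v_neq_u] := other u.
have [[|a ?] [path_end path_pos]] := conn u v; first by case: v_neq_u.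
exact: (sumR_gt0 (i0 := a) _ (path_pos 0%N (ltn0Sn _))).
Qed.

Lemma Rmin_of_attained (E : R -> Prop) : Rmin_of E <> 0 -> E (Rmin_of E).
Proof.
rewrite /Rmin_of; case: excluded_middle_informative => [exE|] //= _.
by case: (constructive_indefinite_description _ exE) => m [].
Qed.

Lemma C_SM_attained (X : finType) (w : X -> X -> R) (S M : {set X}) :
  C_SM w S M <> 0 -> exists sigma f,
    [/\ distr_on S sigma, unit_flow w sigma M f & C_SM w S M = Wtot w * energy w f].
Proof.
rewrite /C_SM => C_neq0.
have /Rmin_of_attained [sigma [sigma_distr R_SM_eq]] : R_SM w S M <> 0.
  by move=> R0; apply: C_neq0; rewrite R0 Rmult_0_r.
have /Rmin_of_attained [f [f_flow R_sigma_eq]] : R_sigma w sigma M <> 0.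
  by move=> R0; apply: C_neq0; rewrite /R_SM R_SM_eq R0 Rmult_0_r.
by exists sigma, f; split => //; rewrite /R_SM R_SM_eq -R_sigma_eq.
Qed.

Theorem mainTheorem4 (X : finType) (w : X -> X -> R) (M S : {set X})
    (p : R) (T : nat) :
  (forall u v, w u v = w v u) ->
  (forall u v, 0 <= w u v) ->
  connected_graph w ->
  M != set0 ->
  S != set0 ->
  S \subset ~: M ->
  (0 < T)%N ->
  2 / INR T <= piSet w S * p <= / C_SM w S M ->
  p / 2 <=
    Prob w S (fun y : traj X T =>
      ((tau y M < tau_plus y S)%N && (tau_plus y S < T)%N)).
Proof.
move=> w_sym w_ge0 conn /set0Pn[m mM] /set0Pn[s sS] SsubM T_gt0 [p_ge p_le].
have S_notin_M u : u \in S -> u \notin M by move=> uS; rewrite -in_setC (subsetP SsubM).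
have wdeg_gt0 : forall u, 0 < wdeg w u.
  apply: connected_wdeg_gt0 => // u; case: (eqVneq u s) => [->|/eqP u_neq_s].
    by exists m => ms; move: (S_notin_M s sS); rewrite -ms mM.
  by exists s => su; apply: u_neq_s.
have W_gt0 : 0 < Wtot w.
  by apply: (sumR_gt0 (i0 := s) _ (wdeg_gt0 s)) => // u _; apply/Rlt_le/wdeg_gt0.
have wdegS_gt0 : 0 < wdegS w S.
  by apply: (sumR_gt0 (i0 := s) _ (wdeg_gt0 s)) => // u _; apply/Rlt_le/wdeg_gt0.
have T_pos : 0 < 2 / INR T by apply: Rdiv_lt_0_compat; [lra | apply/lt_0_INR/ltP].
have C_gt0 : 0 < C_SM w S M.
  case: (Rtotal_order 0 (C_SM w S M)) => [//|[C0|C_lt0]]; first by rewrite -C0 Rinv_0 in p_le; lra.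
  by have := Rinv_lt_0_compat _ C_lt0; lra.
have [sigma [f [sigma_distr f_flow C_eq]]] := C_SM_attained (Rgt_not_eq _ _ C_gt0).
have E_gt0 : 0 < energy w f by rewrite C_eq in C_gt0; nra.
rewrite C_eq in p_le; case: T T_gt0 p_ge {T_pos} => [//|n] _ p_ge.
exact: (return_prob_ge w_sym w_ge0 wdeg_gt0 S_notin_M W_gt0 wdegS_gt0 sigma_distr f_flow E_gt0).
Qed.
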